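(* Let $\mathbf{A} \in \mathbb{R}^{n\times n}$ be invertible and let $\hat{\mathbf{A}}$ be a random $n\times n$ real matrix, invertible almost surely, such that $\mathbb{E}[\hat{\mathbf{A}}^{-2}]$ exists. Assume: (1) (unbiased noise) $\mathbb{E}[\hat{\mathbf{A}}] = \mathbf{A}$; (2) (isotropy) the right-hand side $\mathbf{b}$ is random with auto-correlation $\mathbf{R} = \mathbb{E}[\mathbf{b}\mathbf{b}^T] = \mathbf{I}$; (3) (noise symmetry) $\hat{\mathbf{Z}} = \hat{\mathbf{A}} - \mathbf{A}$ has the same distribution as $-\hat{\mathbf{Z}}$; (4) (residual norm) the error is measured in the norm given by $\mathbf{B} = \mathbf{A}^T\mathbf{A}$. Consider the augmented inverse operator $\hat{\mathbf{A}}^{-1} - \beta \hat{\mathbf{K}}$ with augmentation matrix $\hat{\mathbf{K}} = \hat{\mathbf{A}}^{-1}$, and the optimal augmentation factor $$\beta^* = \arg\min_{\beta\in\mathbb{R}} \mathbb{E}\big[\|\hat{\mathbf{A}}^{-1} - \beta\hat{\mathbf{K}} - \mathbf{A}^{-1}\|_{\mathbf{B},\mathbf{R}}^2\big] = \frac{\mathbb{E}\langle \hat{\mathbf{K}}, \hat{\mathbf{A}}^{-1} - \mathbf{A}^{-1}\rangle_{\mathbf{B},\mathbf{R}}}{\mathbb{E}\|\hat{\mathbf{K}}\|_{\mathbf{B},\mathbf{R}}^2}.$$ Then $\beta^* \geq 0$; equivalently, $\mathbb{E}\,\mathrm{tr}\big[\hat{\mathbf{A}}^{-T}\mathbf{A}^T\mathbf{A}(\hat{\mathbf{A}}^{-1}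 - \mathbf{A}^{-1})\big] \geq 0$.
   Context: For symmetric positive definite $\mathbf{B}$ and symmetric positive semidefinite $\mathbf{R}$, the inner product and semi-norm on $n\times n$ matrices are $\langle \mathbf{M}, \mathbf{N}\rangle_{\mathbf{B},\mathbf{R}} = \mathrm{tr}(\mathbf{R}^{1/2}\mathbf{M}^T\mathbf{B}\mathbf{N}\mathbf{R}^{1/2})$ and $\|\mathbf{M}\|_{\mathbf{B},\mathbf{R}}^2 = \langle \mathbf{M},\mathbf{M}\rangle_{\mathbf{B},\mathbf{R}}$. With $\mathbf{R} = \mathbb{E}[\mathbf{b}\mathbf{b}^T]$ and $\mathbf{b}$ independent of $\hat{\mathbf{A}}$, $\mathbb{E}\|\mathbf{M}\|^2_{\mathbf{B},\mathbf{R}}$ equals the expected squared error $\mathbb{E}\|\mathbf{M}\mathbf{b}\|_{\mathbf{B}}^2$ where $\|\mathbf{v}\|_{\mathbf{B}}^2 = \mathbf{v}^T\mathbf{B}\mathbf{v}$. Expectations are over the distribution of $\hat{\mathbf{A}}$. *)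

From HB Require Import structures.
From mathcomp Require Import all_boot all_order all_algebra.
From mathcomp Require Import all_classical all_reals all_analysis.
Set Implicit Arguments. Unset Strict Implicit. Unset Printing Implicit Defensive.
Import Order.TTheory GRing.Theory Num.Theory.
Local Open Scope classical_set_scope.
Local Open Scope ring_scope.

(* <M, N>_{B,R} = tr(R^{1/2} M^T B N R^{1/2}); Rh stands for R^{1/2}. *)
Definition mx_ip (K : comNzRingType) (n : nat) (B Rh M N : 'M[K]_n) : K :=
  \tr (Rh *m M^T *m B *m N *m Rh).

Definition mx_sqnorm (K : comNzRingType) (n : nat) (B Rh M : 'M[K]_n) : K :=
  mx_ip B Rh M M.

(* Borel sigma-algebra on n x n real matrices (= product sigma-algebra,
   generated by the entry maps). *)
Definition mx_cyl_sets (R : realType) (n : nat) : set (set 'M[R]_n) :=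
  [set S | exists (i j : 'I_n) (D : set R), measurable D /\
                                     S = [set M : 'M[R]_n | D (M i j)]].

Definition mx_borel (R : realType) (n : nat) : set (set 'M[R]_n) :=
  smallest (sigma_algebra setT) (@mx_cyl_sets R n).

Definition same_distribution (R : realType) (d : measure_display)
  (T : measurableType d) (P : probability T R) (n : nat)
  (X Y : T -> 'M[R]_n) : Prop :=
  forall S, mx_borel S -> P (X @^-1` S) = P (Y @^-1` S).

(* Write Z = Ahat - A, U = A (A + Z)^-1 and V = A (A - Z)^-1.  Since
   (A + Z) + (A - Z) = 2 A, one gets U + V = 2 U V, and then
   tr (U^T U) - tr U + tr (V^T V) - tr V = |U - V^T|_F^2 >= 0.
   The integrand tr (Ahat^-T A^T A (Ahat^-1 - A^-1)) equals tr (U^T U) - tr U,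
   so its values at Z and at -Z have a nonnegative sum; as Z and -Z have the
   same distribution, twice its expectation is nonnegative. *)

From HB Require Import structures.
From mathcomp Require Import all_boot all_order all_algebra.
From mathcomp Require Import all_classical all_reals all_analysis.
From mathcomp Require Import measurable_realfun ring lra.
Import Order.TTheory GRing.Theory Num.Theory.
Local Open Scope classical_set_scope.
Local Open Scope ring_scope.

Section invmx_identities.
Context {R : comUnitRingType}.

Lemma mul_invmx_avg_sum n (A X Y : 'M[R]_n) :
  A \in unitmx -> X \in unitmx -> Y \in unitmx -> X + Y = A + A ->
  A *m invmx X + A *m invmx Y = A *m invmx X *m (A *m invmx Y) *+ 2.
Proof.
move=> uA uX uY XYA.
have XA : A *m invmx X *m (X *m invmx A) *m (A *m invmx Y) = A *m invmx Y.
  by rewrite !mulmxA -(mulmxA A) (mulVmx uX) mulmx1 (mulmxV uA) mul1mx.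
have YA : A *m invmx X *m (Y *m invmx A) *m (A *m invmx Y) = A *m invmx X.
  rewrite !mulmxA -(mulmxA _ (invmx A) A) (mulVmx uA) mulmx1.
  by rewrite -(mulmxA _ Y) (mulmxV uY) mulmx1.
have -> : A *m invmx X + A *m invmx Y =
    A *m invmx X *m (X *m invmx A + Y *m invmx A) *m (A *m invmx Y).
  by rewrite mulmxDr mulmxDl XA YA addrC.
by rewrite -mulmxDl XYA mulmxDl (mulmxV uA) mulmxDr mulmxDl mulmx1 mulr2n.
Qed.

Definition beta_numerator {n} (A X : 'M[R]_n) :=
  \tr ((invmx X)^T *m A^T *m A *m (invmx X - invmx A)).

Lemma beta_numeratorE n (A X : 'M[R]_n) : A \in unitmx ->
  beta_numerator A X = \tr ((A *m invmx X)^T *m (A *m invmx X)) - \tr (A *m invmx X).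
Proof.
move=> uA; rewrite /beta_numerator -trmx_mul -mulmxA mulmxBr mulmxV //.
by rewrite mulmxBr mulmx1 raddfB /= mxtrace_tr.
Qed.

End invmx_identities.

Section comRing_trace.
Context {R : comNzRingType}.

Lemma gram_sub_trace_pairE n (U V : 'M[R]_n) : U + V = (U *m V) *+ 2 ->
  (\tr (U^T *m U) - \tr U) + (\tr (V^T *m V) - \tr V) =
  \tr ((U - V^T)^T *m (U - V^T)).
Proof.
move=> UV.
have trV : \tr V = \tr (U *m V) *+ 2 - \tr U.
  by rewrite -raddfMn -UV raddfD addrC addKr.
have trB : (U - V^T)^T = U^T - V by rewrite linearB /= trmxK.
rewrite trV trB mulmxBl !mulmxBr !raddfB /=.
rewrite -trmx_mul mxtrace_tr (mxtrace_mulC V U) (mxtrace_mulC V V^T).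
ring.
Qed.

End comRing_trace.

Section real_trace.
Context {R : realDomainType}.

Lemma mxtrace_gram_ge0 m p (N : 'M[R]_(m, p)) : 0 <= \tr (N^T *m N).
Proof.
apply: sumr_ge0 => i _; rewrite mxE; apply: sumr_ge0 => k _.
by rewrite mxE -expr2 sqr_ge0.
Qed.

Lemma beta_numerator_pair_ge0 n (A Z : 'M[R]_n) :
  A \in unitmx -> A + Z \in unitmx -> A - Z \in unitmx ->
  0 <= beta_numerator A (A + Z) + beta_numerator A (A - Z).
Proof.
move=> uA uAZ uAZ'; rewrite !beta_numeratorE // gram_sub_trace_pairE.
  exact: mxtrace_gram_ge0.
apply: mul_invmx_avg_sum => //.
by rewrite addrACA subrr addr0.
Qed.

End real_trace.

Lemma measurable_inv (R : realType) : measurable_fun [set: R] GRing.inv.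
Proof.
rewrite -(setUCr [set 0]); apply/measurable_funU => //; first exact: measurableC.
split; first exact: measurable_fun_set1.
apply: open_continuous_measurable_fun.
  exact/closed_openC/accessible_closed_set1/hausdorff_accessible/norm_hausdorff.
by move=> x; rewrite inE => /eqP x0; exact: inv_continuous.
Qed.

Section entrywise_measurability.
Context {d} {T : measurableType d} {R : realType}.

Definition mx_measurable {m p} (F : T -> 'M[R]_(m, p)) :=
  forall i j, measurable_fun setT (fun w => F w i j).

Lemma mx_measurable_cst m p (C : 'M[R]_(m, p)) : mx_measurable (fun=> C).
Proof. by move=> i j; exact: measurable_cst. Qed.

Lemma mx_measurableD m p (F G : T -> 'M[R]_(m, p)) :
  mx_measurable F -> mx_measurable G -> mx_measurable (fun w => F w + G w).
Proof. by move=> mF mG i j; under eq_fun do rewrite mxE; exact: measurable_funD. Qed.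

Lemma mx_measurableN m p (F : T -> 'M[R]_(m, p)) :
  mx_measurable F -> mx_measurable (fun w => - F w).
Proof. by move=> mF i j; under eq_fun do rewrite mxE; exact: measurableT_comp. Qed.

Lemma mx_measurableM m p q (F : T -> 'M[R]_(m, p)) (G : T -> 'M[R]_(p, q)) :
  mx_measurable F -> mx_measurable G -> mx_measurable (fun w => F w *m G w).
Proof.
move=> mF mG i j; under eq_fun do rewrite mxE.
by apply: measurable_sum => k; exact: measurable_funM.
Qed.

Lemma mx_measurable_trmx m p (F : T -> 'M[R]_(m, p)) :
  mx_measurable F -> mx_measurable (fun w => (F w)^T).
Proof. by move=> mF i j; under eq_fun do rewrite mxE; exact: mF. Qed.

Lemma measurable_fun_mxtrace m (F : T -> 'M[R]_m) :
  mx_measurable F -> measurable_fun setT (fun w => \tr (F w)).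
Proof. by move=> mF; apply: measurable_sum => i; exact: mF. Qed.

Lemma measurable_fun_det m (F : T -> 'M[R]_m) :
  mx_measurable F -> measurable_fun setT (fun w => \det (F w)).
Proof.
move=> mF; apply: measurable_sum => s; apply: measurable_funM.
  exact: measurable_cst.
by apply: measurable_prod => i _; exact: mF.
Qed.

Lemma mx_measurable_invmx m (F : T -> 'M[R]_m) :
  mx_measurable F -> mx_measurable (fun w => invmx (F w)).
Proof.
move=> mF i j.
have -> : (fun w => invmx (F w) i j) = fun w =>
    if \det (F w) == 0 then F w i j else (\det (F w))^-1 * cofactor (F w) j i.
  by apply/funext => w; rewrite /invmx unitmxE unitfE; case: eqP; rewrite ?mxE.
apply: measurable_fun_ifT.
- by apply: measurable_fun_eqr; [exact: measurable_fun_det | exact: measurable_cst].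
- exact: mF.
apply: measurable_funM.
  by apply: measurableT_comp; [exact: measurable_inv | exact: measurable_fun_det].
apply: measurable_funM; first exact: measurable_cst.
by apply: measurable_fun_det => k l; under eq_fun do rewrite !mxE; exact: mF.
Qed.

Lemma measurable_fun_beta_numerator m (A : 'M[R]_m) (F : T -> 'M[R]_m) :
  mx_measurable F -> measurable_fun setT (fun w => beta_numerator A (F w)).
Proof.
move=> mF.
have mFinv : mx_measurable (fun w => invmx (F w)) by exact: mx_measurable_invmx.
apply/measurable_fun_mxtrace/mx_measurableM.
  apply/mx_measurableM/mx_measurable_cst.
  exact/mx_measurableM/mx_measurable_cst/mx_measurable_trmx.
exact/mx_measurableD/mx_measurableN/mx_measurable_cst.
Qed.

End entrywise_measurability.

Section borel_matrices.
Variables (R : realType) (n : nat).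

Definition borel_mx := 'M[R]_n.
HB.instance Definition _ := Choice.on borel_mx.
HB.instance Definition _ := isPointed.Build borel_mx 0.

Definition borel_mxType : measurableType _ :=
  g_sigma_algebraType (@mx_cyl_sets R n : set (set borel_mx)).

Lemma mx_measurable_borel_id : mx_measurable (fun M : borel_mxType => M : 'M[R]_n).
Proof. by move=> i j _ D mD; rewrite setTI; apply: sub_sigma_algebra; exists i, j, D. Qed.

Lemma measurable_fun_borel_mx d (T : measurableType d) (F : T -> 'M[R]_n) :
  mx_measurable F -> measurable_fun setT (F : T -> borel_mxType).
Proof.
move=> mF; apply: measurability => // _ [_ [i [j [D [mD ->]]]] <-].
by have := mF i j measurableT D mD; rewrite setTI.
Qed.

Lemma measurable_nonunit_shift (A : 'M[R]_n) :
  measurable [set M : borel_mxType | A + M \notin unitmx].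
Proof.
have mdet : measurable_fun setT (fun M : borel_mxType => \det (A + M)).
  apply: measurable_fun_det; apply: mx_measurableD.
  - exact: mx_measurable_cst.
  - exact: mx_measurable_borel_id.
have := mdet measurableT [set 0] (measurable_set1 0); rewrite setTI.
congr measurable; apply/funext => M /=.
by rewrite unitmxE unitfE negbK; apply/propext; split => /eqP.
Qed.

End borel_matrices.

Section Rintegral_lemmas.
Context d (T : measurableType d) (R : realType) (mu : {measure set T -> \bar R}).
Variable D : set T.
Hypothesis mD : measurable D.

Lemma Rintegral_not_integrable (f : T -> R) : measurable_fun D f ->
  ~~ mu.-integrable D (EFin \o f) -> \int[mu]_(x in D) f x = 0.
Proof.
move=> mf nIf; have mEf : measurable_fun D (EFin \o f) by exact/measurable_EFinP.
have absy : (\int[mu]_(x in D) ((EFin \o f)^\+ x + (EFin \o f)^\- x) = +oo)%E.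
  have -> : (fun x => (EFin \o f)^\+ x + (EFin \o f)^\- x)%E = abse \o (EFin \o f).
    by rewrite fune_abse.
  apply/eqP; rewrite eq_le leey /= leNgt; apply/negP => fin.
  by move/negP: nIf; apply; apply/integrableP; split.
rewrite /Rintegral integralE.
move: absy; rewrite ge0_integralD //; last 2 first.
- exact: measurable_funepos.
- exact: measurable_funeneg.
have := integral_ge0 mu (fun x _ => funepos_ge0 (EFin \o f) x).
have := integral_ge0 mu (fun x _ => funeneg_ge0 (EFin \o f) x).
by case: (\int[mu]_(x in D) _)%E => [a||]; case: (\int[mu]_(x in D) _)%E => [b||].
Qed.

Lemma ae_ge0_Rintegral_ge0 (f : T -> R) : measurable_fun D f ->
  {ae mu, forall x, D x -> 0 <= f x} -> 0 <= \int[mu]_(x in D) f x.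
Proof.
move=> mf f0; apply: fine_ge0; rewrite integralE.
have -> : (\int[mu]_(x in D) (EFin \o f)^\- x = 0)%E.
  rewrite (ae_eq_integral (cst 0%E)) ?integral0 //.
  - exact/measurable_funeneg/measurable_EFinP.
  - apply: filterS f0 => x f0x Dx; rewrite funenegE /=.
    by apply/max_idPr; rewrite lee_fin oppr_le0 f0x.
by rewrite sube0; apply: integral_ge0 => x _; exact: funepos_ge0.
Qed.

End Rintegral_lemmas.

Section equal_distribution.
Context {d} {T : measurableType d} {R : realType} {mu : {measure set T -> \bar R}}.
Context {d'} {M : measurableType d'} {X Y : T -> M}.
Hypotheses (mX : measurable_fun setT X) (mY : measurable_fun setT Y).
Hypothesis XY : forall S, measurable S -> mu (X @^-1` S) = mu (Y @^-1` S).

Lemma ge0_integral_eq_distribution (h : M -> \bar R) :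
  measurable_fun setT h -> (forall y, (0 <= h y)%E) ->
  (\int[mu]_w (h \o X) w = \int[mu]_w (h \o Y) w)%E.
Proof.
move=> mh h0.
rewrite -[LHS](ge0_integral_pushforward mX mu measurableT mh (fun y _ => h0 y)).
rewrite -[RHS](ge0_integral_pushforward mY mu measurableT mh (fun y _ => h0 y)).
by apply: eq_measure_integral => S mS _; exact: XY.
Qed.

Lemma integral_eq_distribution (h : M -> \bar R) : measurable_fun setT h ->
  (\int[mu]_w (h \o X) w = \int[mu]_w (h \o Y) w)%E.
Proof.
move=> mh; rewrite integralE [RHS]integralE.
rewrite (funepos_comp h X) (funepos_comp h Y) (funeneg_comp h X) (funeneg_comp h Y).
rewrite (ge0_integral_eq_distribution _ (measurable_funepos mh) (funepos_ge0 h)).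
by rewrite (ge0_integral_eq_distribution _ (measurable_funeneg mh) (funeneg_ge0 h)).
Qed.

Lemma integrable_eq_distribution (h : M -> \bar R) : measurable_fun setT h ->
  mu.-integrable setT (h \o X) -> mu.-integrable setT (h \o Y).
Proof.
move=> mh /integrableP[_ hX]; apply/integrableP; split.
  exact: measurableT_comp.
rewrite -(ge0_integral_eq_distribution (abse \o h)) //.
- exact: measurableT_comp.
- by move=> y; exact: abse_ge0.
Qed.

Lemma ae_eq_distribution (S : set M) : measurable S ->
  {ae mu, forall w, ~ S (X w)} -> {ae mu, forall w, ~ S (Y w)}.
Proof.
move=> mS [N [mN N0 XSN]]; exists (Y @^-1` S); split.
- by rewrite -[_ @^-1` _]setTI; exact: mY.
- apply/eqP; rewrite eq_le measure_ge0 andbT -XY // -N0.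
  apply: le_measure; rewrite ?inE //; last by move=> w XSw; apply: XSN.
  by rewrite -[_ @^-1` _]setTI; exact: mX.
- by move=> w /= /contrapT.
Qed.

Lemma Rintegral_ge0_eq_distribution (h : M -> R) : measurable_fun setT h ->
  {ae mu, forall w, 0 <= h (X w) + h (Y w)} -> 0 <= \int[mu]_w (h \o X) w.
Proof.
move=> mh hXY0; have mEh : measurable_fun setT (EFin \o h) by exact/measurable_EFinP.
have [iX|niX] := boolP (mu.-integrable setT (EFin \o (h \o X))); last first.
  by rewrite Rintegral_not_integrable //; exact: measurableT_comp.
have iY : mu.-integrable setT (EFin \o (h \o Y)).
  exact: (integrable_eq_distribution _ mEh iX).
have eXY : \int[mu]_w (h \o X) w = \int[mu]_w (h \o Y) w.
  by rewrite /Rintegral (integral_eq_distribution _ mEh).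
have : 0 <= \int[mu]_w ((h \o X) w + (h \o Y) w).
  apply: ae_ge0_Rintegral_ge0 => //.
    by apply: measurable_funD; exact: measurableT_comp.
  by apply: filterS hXY0 => w hw _.
rewrite RintegralD // -eXY; lra.
Qed.

End equal_distribution.

Lemma beta_numerator_Rintegral_ge0 d (T : measurableType d) (R : realType)
  (mu : {measure set T -> \bar R}) n (A : 'M[R]_n) (Ahat : T -> 'M[R]_n) :
  A \in unitmx -> mx_measurable Ahat -> mu [set w | Ahat w \notin unitmx] = 0%E ->
  (forall S, mx_borel S ->
     mu ((fun w => Ahat w - A) @^-1` S) = mu ((fun w => - (Ahat w - A)) @^-1` S)) ->
  0 <= \int[mu]_w beta_numerator A (Ahat w).
Proof.
move=> uA mAhat hinv hsym.
pose Z w : borel_mxType R n := Ahat w - A.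
have mZ : measurable_fun setT Z.
  apply: measurable_fun_borel_mx.
  by apply: mx_measurableD; [exact: mAhat | exact: mx_measurable_cst].
have mZn : measurable_fun setT (fun w => - Z w : borel_mxType R n).
  apply/measurable_fun_borel_mx/mx_measurableN.
  by apply: mx_measurableD; [exact: mAhat | exact: mx_measurable_cst].
set nonunit := [set M : borel_mxType R n | A + M \notin unitmx].
have AZ w : A + Z w = Ahat w by rewrite addrC subrK.
have unitZ : {ae mu, forall w, ~ nonunit (Z w)}.
  exists (Z @^-1` nonunit); split; last by move=> w /= /contrapT.
  - rewrite -[_ @^-1` _]setTI; apply: mZ => //; exact: measurable_nonunit_shift.
  - suff -> : Z @^-1` nonunit = [set w | Ahat w \notin unitmx] by [].
    by apply/seteqP; split => w; rewrite /preimage /nonunit /= AZ.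
have unitZn : {ae mu, forall w, ~ nonunit (- Z w)}.
  by apply: (ae_eq_distribution mZ mZn hsym) unitZ; exact: measurable_nonunit_shift.
under eq_Rintegral do rewrite -AZ.
apply: (Rintegral_ge0_eq_distribution mZ mZn hsym (fun M => beta_numerator A (A + M))).
  apply: measurable_fun_beta_numerator; apply: mx_measurableD.
  - exact: mx_measurable_cst.
  - exact: mx_measurable_borel_id.
apply: filterS2 unitZ unitZn => w /negP; rewrite negbK => uZ /negP; rewrite negbK => uZn.
exact: beta_numerator_pair_ge0.
Qed.

Theorem theorem4p1 (R : realType) (d : measure_display) (T : measurableType d)
  (P : probability T R) (n : nat) (A : 'M[R]_n) (Ahat : T -> 'M[R]_n)
  (hA : A \in unitmx)
  (hmeas : forall i j, measurable_fun setT (fun w => Ahat w i j))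
  (hinv : P [set w | Ahat w \notin unitmx] = 0%E)
  (hint : forall i j, P.-integrable setT (fun w => (Ahat w i j)%:E))
  (hmean : forall i j, (\int[P]_w (Ahat w i j)%:E)%E = (A i j)%:E)
  (hsq : forall i j k l, P.-integrable setT
           (fun w => (invmx (Ahat w) i j * invmx (Ahat w) k l)%:E))
  (hsym : same_distribution P (fun w => Ahat w - A) (fun w => - (Ahat w - A))) :
  let B := A^T *m A in
  let Rh := (1%:M : 'M[R]_n) in
  let Khat := fun w => invmx (Ahat w) in
  let beta_star :=
    Rintegral P setT (fun w => mx_ip B Rh (Khat w) (invmx (Ahat w) - invmx A))
    / Rintegral P setT (fun w => mx_sqnorm B Rh (Khat w)) in
  0 <= beta_star /\
  0 <= Rintegral P setT
         (fun w => \tr ((invmx (Ahat w))^T *m A^T *m A *m (invmx (Ahat w) - invmx A))).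
Proof.
move=> B Rh Khat beta_star.
have num_ge0 : 0 <= \int[P]_w beta_numerator A (Ahat w).
  exact: beta_numerator_Rintegral_ge0 hsym.
split=> //; apply: divr_ge0.
  by under eq_Rintegral do rewrite /mx_ip mul1mx mulmx1 !mulmxA.
apply: Rintegral_ge0 => w _; rewrite /mx_sqnorm /mx_ip mul1mx mulmx1 /B.
by rewrite !mulmxA -mulmxA -trmx_mul mxtrace_gram_ge0.
Qed.
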